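(* Let $\mathcal M(\mathcal P,<)$ be a Morse decomposition of an isolated invariant set $S$, let $\{N(I): I\subset\mathcal P\text{ an attracting interval}\}$ be a Morse set filtration for $\mathcal M(\mathcal P,<)$, and let $J\subset I$ be attracting intervals. Then $(N(I),N(J))$ is a filtration pair for $M_{I\setminus J}$.
   Context: Let $X$ be a locally compact metric space, $U\subset X$ open and $f:U\to X$ continuous. A solution through $x$ is a map $\sigma:\mathbb Z\to U$ with $\sigma(0)=x$ and $f(\sigma(n))=\sigma(n+1)$ for all $n$; for $N\subset U$, $\operatorname{Inv} N$ is the set of $x\in N$ admitting a solution through $x$ with all values in $N$. A compact $N\subset U$ is an isolating neighborhood if $\operatorname{Inv} N\subset\operatorname{Int} N$; $S$ is an isolated invariant set if $S=\operatorname{Inv} N$ for some isolating neighborhood $N$. The exit set of $N$ is $N^-=\{x\in N:f(x)\notin\operatorname{Int} N\}$. A filtration pair for an isolated invariant set $S$ is a pair of compact sets $L\subset N$ contained in the interior of the domain of $f$, each the closure of its interior, such that (1) $\operatorname{cl}(N\setminus L)$ is an isolating neighborhood with $\operatorname{Inv}\operatorname{cl}(N\setminus L)=S$; (2) $L$ is a neighborhood of $N^-$ in $N$; (3) $f(L)\cap\operatorname{cl}(N\setminus L)=\emptyset$. $\omega(x)=\bigcap_{K>0}\operatorname{cl}\big(\bigcup_{n>K}\{f^n(x)\}\big)$, $\omega(\sigma)=\omega(\sigma(0))$, $\alpha(\sigma)=\bigcap_{K>0}\operatorname{cl}\big(\bigcup_{n>K}\{\sigma(-n)\}\big)$. For $B,C\subset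 S$, $C(B,C;S)$ is the set of $x\in S\setminus(B\cup C)$ for which there is a solution $\sigma:\mathbb Z\to S$ through $x$ with $\alpha(\sigma)\subset B$ and $\omega(x)\subset C$. Let $\mathcal P$ be a finite set with a partial order $<$ (irreflexive, transitive). $I\subset\mathcal P$ is an interval if $p<r<q$, $p,q\in I$ imply $r\in I$, and an attracting interval if $r<q$, $q\in I$ imply $r\in I$. A collection $\{M_p\subset S:p\in\mathcal P\}$ of pairwise disjoint isolated invariant sets is a Morse decomposition of $S$ if for every $x\in S$ and every solution $\sigma:\mathbb Z\to S$ through $x$, either $\sigma(\mathbb Z)\subset M_p$ for some $p$, or $\omega(\sigma)\subset M_p$ and $\alpha(\sigma)\subset M_q$ for some $p<q$. For an interval $I$, $M_I=\bigcup_{p\in I}M_p\cup\bigcup_{q,r\in I}C(M_q,M_r;S)$. A Morse set filtration for $\mathcal M(\mathcal P,<)$ is a collection of compact sets $\{N(I)\subset X: I\text{ an attracting interval}\}$ such that for all attracting intervals $I,J$: (1) $(N(I),N(\emptyset))$ is a filtration pair for $M_I$; (2) $N(I)\cap N(J)=N(I\cap J)$; (3) $N(I)\cup N(J)=N(I\cup J)$. *)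

From HB Require Import structures.
From mathcomp Require Import all_boot all_order all_algebra.
From mathcomp Require Import all_classical all_reals all_analysis.
Set Implicit Arguments. Unset Strict Implicit. Unset Printing Implicit Defensive.
Import Order.TTheory GRing.Theory Num.Theory.
Local Open Scope classical_set_scope.
Local Open Scope ring_scope.

Section Dyn.
Variable T : topologicalType.
(* f : U -> T is modelled by a total map f : T -> T together with the open
   domain U; only the values of f on U are ever used. *)
Variables (U : set T) (f : T -> T).

Definition is_solution (sigma : int -> T) : Prop :=
  forall n : int, U (sigma n) /\ f (sigma n) = sigma (n + 1).

Definition solution_through (sigma : int -> T) (x : T) : Prop :=
  is_solution sigma /\ sigma 0 = x.

Definition Inv (N : set T) : set T :=
  [set x | N x /\ exists sigma, solution_through sigma x /\
                                forall n : int, N (sigma n)].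

Definition isolating_nbhd (N : set T) : Prop :=
  compact N /\ N `<=` U /\ Inv N `<=` interior N.

Definition isolated_invariant (S : set T) : Prop :=
  exists N, isolating_nbhd N /\ S = Inv N.

Definition exit_set (N : set T) : set T :=
  [set x | N x /\ ~ interior N (f x)].

Definition rel_nbhd_of (N L A : set T) : Prop :=
  exists O : set T, open O /\ A `<=` O /\ O `&` N `<=` L.

Definition filtration_pair (S N L : set T) : Prop :=
  compact N /\ compact L /\ L `<=` N /\
  N `<=` interior U (* = U, as U is open *) /\
  closure (interior N) = N /\ closure (interior L) = L /\
  (isolating_nbhd (closure (N `\` L)) /\ Inv (closure (N `\` L)) = S) /\
  rel_nbhd_of N L (exit_set N) /\
  (f @` L) `&` closure (N `\` L) = set0.

Definition omega_limit (x : T) : set T :=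
  \bigcap_(K in [set K : nat | (0 < K)%N])
     closure [set iter n f x | n in [set n : nat | (K < n)%N]].

Definition omega_sol (sigma : int -> T) : set T := omega_limit (sigma 0).

Definition alpha_sol (sigma : int -> T) : set T :=
  \bigcap_(K in [set K : nat | (0 < K)%N])
     closure [set sigma (- (n%:Z)) | n in [set n : nat | (K < n)%N]].

Definition connecting (B C S : set T) : set T :=
  [set x | (S `\` (B `|` C)) x /\
     exists sigma, solution_through sigma x /\
       (forall n : int, S (sigma n)) /\
       alpha_sol sigma `<=` B /\ omega_limit x `<=` C].

Section Morse.
Variables (P : finType) (lt : rel P).

Definition strict_partial_order : Prop :=
  irreflexive lt /\ transitive lt.

Definition interval (I : {set P}) : Prop :=
  forall p q r, p \in I -> q \in I -> lt p r -> lt r q -> r \in I.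

Definition attracting_interval (I : {set P}) : Prop :=
  forall r q, lt r q -> q \in I -> r \in I.

Definition morse_decomposition (S : set T) (M : P -> set T) : Prop :=
  [/\ forall p q, p != q -> M p `&` M q = set0,
      forall p, isolated_invariant (M p),
      forall p, M p `<=` S &
      forall x sigma, solution_through sigma x ->
        (forall n : int, S (sigma n)) ->
        (exists p, forall n : int, M p (sigma n)) \/
        (exists p q, lt p q /\ omega_sol sigma `<=` M p /\
                     alpha_sol sigma `<=` M q)].

Definition morse_set (S : set T) (M : P -> set T) (I : {set P}) : set T :=
  (\bigcup_(p in [set p | p \in I]) M p) `|`
  (\bigcup_(q in [set q | q \in I])
     \bigcup_(r in [set r | r \in I]) connecting (M q) (M r) S).

Definition morse_set_filtration (S : set T) (M : P -> set T)
    (N : {set P} -> set T) : Prop :=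
  forall I J, attracting_interval I -> attracting_interval J ->
    [/\ filtration_pair (morse_set S M I) (N I) (N finset.set0),
        N I `&` N J = N (I :&: J) &
        N I `|` N J = N (I :|: J)].

End Morse.
End Dyn.

From Pilot Require Import Defs.
From HB Require Import structures.
From mathcomp Require Import all_boot all_order all_algebra.
From mathcomp Require Import all_classical all_reals all_analysis.
From mathcomp Require Import zify.
Set Implicit Arguments. Unset Strict Implicit. Unset Printing Implicit Defensive.
Import Order.TTheory GRing.Theory Num.Theory.
Local Open Scope classical_set_scope.
Local Open Scope ring_scope.

(* The pair (N(I), N(J)) inherits compactness and regularity from the
   filtration pairs of M_I and M_J, and the exit set of N(I) lies in
   N(∅) ⊆ N(J).  Off N(∅) every N(K) is positively invariant, since orbits
   can only leave N(K) through its exit set.  Hence M_p misses N(K) when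
   p ∉ K: otherwise the ω-limit of an orbit in M_p would stay in
   N(K) \ N(∅), so inside M_K, and M_p would meet M_K.  It follows that the
   Morse sets met by an orbit in cl(N(I) \ N(J)), or by its α- and ω-limits,
   are indexed by I \ J.  Conversely a connecting orbit between Morse sets
   indexed by I \ J never enters N(J), since its ω-limit would follow it
   there, and never leaves N(I), since it comes from an α-limit in the
   interior of N(I) and N(I) is positively invariant. *)

Lemma closure_sub_closed (T : topologicalType) (A C : set T) :
  closed C -> A `<=` C -> closure A `<=` C.
Proof. by move=> cC AC; rewrite closureE; exact: smallest_sub. Qed.

Lemma interior_closure_setD (T : topologicalType) (A C : set T) x :
  C° x -> ~ closure (A `\` C) x.
Proof. by move=> Cx /(_ _ Cx) [y [ [_ nCy] Cy]]. Qed.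

Section Dynamics.
Variables (T : topologicalType) (U : set T) (f : T -> T).
Hypotheses (hT : hausdorff_space T) (oU : open U)
  (cf : {within U, continuous f}).

Definition solution_in (N : set T) (s : int -> T) :=
  is_solution U f s /\ forall n, N (s n).

Lemma solution_shift s k : is_solution U f s ->
  is_solution U f (fun n => s (n + k)).
Proof. by move=> hs n; have [? ->] := hs (n + k); split=> //; congr s; lia. Qed.

Lemma iter_solution s n : is_solution U f s -> iter n f (s 0) = s n%:Z.
Proof.
by move=> hs; elim: n => [|n /= ->] //; have [_ ->] := hs n; congr s; lia.
Qed.

Lemma Inv_solution N s n : solution_in N s -> Defs.Inv U f N (s n).
Proof.
move=> [hs sN]; split=> //; exists (fun m => s (m + n)).
by split=> //; split; [exact: solution_shift | rewrite add0r].
Qed.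

Lemma InvS N N' : N `<=` N' -> Defs.Inv U f N `<=` Defs.Inv U f N'.
Proof.
move=> NN' x [Nx [s [hs sN]]]; split; first exact: NN'.
by exists s; split=> // n; exact/NN'/sN.
Qed.

Lemma Inv_image N x : Defs.Inv U f N x -> N (f x).
Proof. by move=> [_ [s [ [hs <-] sN]]]; have [_ ->] := hs 0; exact: sN. Qed.

Lemma isolated_invariant_solution S x : isolated_invariant U f S -> S x ->
  exists2 s, solution_in S s & s 0 = x.
Proof.
move=> [N [_ ->]] [_ [s [ [hs s0] sN]]].
by exists s => //; split=> // n; apply: Inv_solution.
Qed.

Lemma solution_forward_invariant (N L : set T) s a :
  exit_set f N `<=` L -> is_solution U f s -> (forall n, ~ L (s n)) ->
  N (s a) -> forall n, a <= n -> N (s n).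
Proof.
move=> exitL hs sL Na n an; have -> : n = a + `|n - a|%N%:Z by lia.
elim: `|n - a|%N => [|k IH]; first by rewrite addr0.
rewrite -addn1 PoszD addrA; have [_ <-] := hs (a + k%:Z).
apply: interior_subset; apply: contrapT => nint.
exact: sL _ (exitL _ (conj IH nint)).
Qed.

Lemma omega_limit_sub_closed (C : set T) s a : closed C -> is_solution U f s ->
  (forall n, a <= n -> C (s n)) -> omega_limit f (s 0) `<=` C.
Proof.
move=> cC hs aC z /(_ `|a|%N.+1 (ltn0Sn _)) hz.
apply: (closure_sub_closed cC _ hz) => _ [n /= an <-].
by rewrite iter_solution //; apply: aC; lia.
Qed.

Lemma alpha_sol_sub_closed (C : set T) s a : closed C ->
  (forall n, n <= a -> C (s n)) -> alpha_sol s `<=` C.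
Proof.
move=> cC aC z /(_ `|a|%N.+1 (ltn0Sn _)) hz.
by apply: (closure_sub_closed cC _ hz) => _ [n /= an <-]; apply: aC; lia.
Qed.

Section FiltrationPair.
Variables (S N L : set T).
Hypothesis fp : filtration_pair U f S N L.

Lemma filtration_exit : exit_set f N `<=` L.
Proof.
have [_ [_ [_ [_ [_ [_ [_ [ [W [_ [exitW WL]]] _]]]]]]]] := fp.
by move=> x ex; apply: WL; split; [exact: exitW | case: ex].
Qed.

Lemma filtration_Inv : Defs.Inv U f (closure (N `\` L)) = S.
Proof. by have [_ [_ [_ [_ [_ [_ [ [_ ->] _]]]]]]] := fp. Qed.

Lemma filtration_image x : L x -> ~ closure (N `\` L) (f x).
Proof.
have [_ [_ [_ [_ [_ [_ [_ [_ fLB]]]]]]]] := fp.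
move=> Lx Bfx; have : (f @` L `&` closure (N `\` L)) (f x).
  by split=> //; exists x.
by rewrite fLB.
Qed.

Lemma filtration_invariant_disj x : S x -> ~ L x.
Proof. by rewrite -filtration_Inv => /Inv_image Bfx /filtration_image. Qed.

Lemma filtration_invariant_interior : S `<=` N°.
Proof.
have [cN [_ [_ [_ [_ [_ [ [[_ [_ BInt]] _] _]]]]]]] := fp.
rewrite -filtration_Inv => x /BInt; apply: interiorS.
by apply: closure_sub_closed (compact_closed hT cN) _ => y [].
Qed.

End FiltrationPair.

Section LimitSolutions.
Import ArrowAsProduct.
Variables (N : set T) (cN : compact N) (NU : N `<=` U).

(* A cluster point tau of the sequence s in the Tychonoff product N^Z is
   again a solution: f (tau n) and tau (n + 1) cannot be separated, because
   every product neighbourhood of tau contains some s k, and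
   f (s k n) = s k (n + 1). *)
Lemma cluster_solution (s : nat -> int -> T) :
  (forall k, solution_in N (s k)) ->
  exists2 tau, solution_in N tau &
    forall m k0, closure [set s k m | k in [set k | (k0 < k)%N]] (tau m).
Proof.
move=> sN.
have cK : compact [set g : int -> T | forall i, N (g i)].
  exact: tychonoff (fun _ : int => cN).
have [|tau [Ntau cltau]] := cK (s @ \oo) _.
  by exists 0%N => // k _; exact: (sN k).2.
have cfU : {in U, continuous f} by rewrite -continuous_open_subspace.
exists tau; last first.
  move=> m k0 B nB.
  have nV : nbhs tau (proj m @^-1` B) by exact: proj_continuous.
  have FE : (s @ \oo) (s @` [set k | (k0 < k)%N]).
    by apply: filterS (nbhs_infty_gt k0) => k hk; exists k.
  have [g [ [k hk <-] Vg]] := cltau _ _ FE nV.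
  by exists (s k m); split => //; exists k.
split => // n; split; first exact/NU/Ntau.
apply: hT => A B nA nB.
have nW : nbhs (tau n) (f @^-1` A).
  by have := cfU (tau n); rewrite inE => /(_ (NU (Ntau n))); apply.
have nV : nbhs tau (proj n @^-1` (f @^-1` A) `&` proj (n + 1) @^-1` B).
  by apply: filterI; apply: proj_continuous.
have FE : (s @ \oo) (range s) by exists 0%N => // k _; exists k.
have [g [ [k _ <-] [Vg1 Vg2]]] := cltau _ _ FE nV.
exists (s k (n + 1)); split => //.
by have [_ <-] := (sN k).1 n.
Qed.

Lemma omega_limit_solution s : solution_in N s ->
  exists2 tau, solution_in N tau & forall n, omega_limit f (s 0) (tau n).
Proof.
move=> [hs sN].
have shifted k : solution_in N (fun n => s (n + k%:Z)).
  by split=> [|n]; [exact: solution_shift | exact: sN].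
have [tau Ntau cl] := cluster_solution shifted.
exists tau => // n K _; apply: closureS (cl n (`|n|%N + K)%N) => _ [k /= nk <-].
exists (absz (n + k%:Z)) => /=; first lia.
by rewrite iter_solution //; congr s; lia.
Qed.

Lemma alpha_limit_solution s : solution_in N s ->
  exists2 tau, solution_in N tau & forall n, alpha_sol s (tau n).
Proof.
move=> [hs sN].
have shifted k : solution_in N (fun n => s (n - k%:Z)).
  by split=> [|n]; [exact: solution_shift | exact: sN].
have [tau Ntau cl] := cluster_solution shifted.
exists tau => // n K _; apply: closureS (cl n (`|n|%N + K)%N) => _ [k /= nk <-].
by exists `|k%:Z - n|%N => /=; [lia | congr s; lia].
Qed.

End LimitSolutions.

Lemma isolated_omega_solution S s : isolated_invariant U f S ->
  solution_in S s ->
  exists2 tau, solution_in S tau & forall n, omega_limit f (s 0) (tau n).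
Proof.
move=> [N [ [cN [NU _]] ->]] [hs sInv].
have sN : solution_in N s by split=> // n; have [] := sInv n.
have [tau Ntau om] := omega_limit_solution cN NU sN.
by exists tau => //; split=> [|n]; [case: Ntau | exact: Inv_solution].
Qed.

Lemma isolated_alpha_solution S s : isolated_invariant U f S ->
  solution_in S s ->
  exists2 tau, solution_in S tau & forall n, alpha_sol s (tau n).
Proof.
move=> [N [ [cN [NU _]] ->]] [hs sInv].
have sN : solution_in N s by split=> // n; have [] := sInv n.
have [tau Ntau al] := alpha_limit_solution cN NU sN.
by exists tau => //; split=> [|n]; [case: Ntau | exact: Inv_solution].
Qed.

Section MorseFiltration.
Variables (P : finType) (lt : rel P) (S : set T) (M : P -> set T)
  (N : {set P} -> set T).
Hypotheses (iS : isolated_invariant U f S) (md : morse_decomposition U f lt S M)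
  (mf : morse_set_filtration U f lt S M N).

Local Notation N0 := (N finset.set0).
Local Notation MS := (morse_set U f S M).
Local Notation attracting := (attracting_interval lt).

Lemma attracting_interval_setT : attracting [set: P].
Proof. by move=> r q _; rewrite inE. Qed.

Lemma morse_filtration K : attracting K -> filtration_pair U f (MS K) (N K) N0.
Proof. by move=> hK; case: (mf hK hK). Qed.

Lemma morse_filtration_closed K : attracting K -> closed (N K).
Proof. by move=> /morse_filtration[cK _]; exact: compact_closed. Qed.

Lemma morse_filtration0_sub K : attracting K -> N0 `<=` N K.
Proof. by move=> /morse_filtration[_ [_ []]]. Qed.

Lemma morse_filtration_mono K K' : attracting K -> attracting K' ->
  K \subset K' -> N K `<=` N K'.
Proof.
move=> hK hK' KK'; case: (mf hK hK') => _ + _.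
by rewrite (finset.setIidPl KK') => <- x [].
Qed.

Lemma morse_disjoint p q x : M p x -> M q x -> p = q.
Proof.
case: md => disj _ _ _ Mp Mq; case: (eqVneq p q) => // pq.
have : (M p `&` M q) x by [].
by rewrite disj.
Qed.

Lemma morse_sub_morse_set (K : {set P}) p : p \in K -> M p `<=` MS K.
Proof. by move=> pK x Mx; left; exists p. Qed.

Lemma morse_set_sub_invariant K : MS K `<=` S.
Proof.
case: md => _ _ subS _.
by move=> x [ [p _ /subS //] | [q _ [r _ [ [Sx _] _]]]].
Qed.

Lemma morse_set_of_limits (K : {set P}) p q s : p \in K -> q \in K ->
  is_solution U f s -> (forall n, S (s n)) ->
  omega_sol f s `<=` M p -> alpha_sol s `<=` M q -> MS K (s 0).
Proof.
move=> pK qK hs sS om al.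
have [Mp|nMp] := pselect (M p (s 0)); first by left; exists p.
have [Mq|nMq] := pselect (M q (s 0)); first by left; exists q.
right; exists q => //; exists p => //; split; first by split=> [|[]].
by exists s.
Qed.

Lemma invariant_sub_morse_setT : S `<=` MS [set: P].
Proof.
move=> x Sx; have [s [hs sS] s0] := isolated_invariant_solution iS Sx.
case: md => _ _ _ /(_ x s (conj hs s0) sS) [ [p Mp] | [p [q [_ [om al]]]]].
  by left; exists p; [rewrite /= inE | rewrite -s0].
by rewrite -s0; apply: (morse_set_of_limits _ _ hs sS om al); rewrite inE.
Qed.

Lemma invariant_notin_filtration0 x : S x -> ~ N0 x.
Proof.
move=> /invariant_sub_morse_setT; apply: filtration_invariant_disj.
exact: morse_filtration attracting_interval_setT.
Qed.

Lemma morse_set_mem (K : {set P}) p x : MS K x -> M p x -> p \in K.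
Proof.
case: md => _ isoM _ _.
move=> [ [q qK Mq] Mp | [q _ [r rK [_ [_ [_ [_ [_ om]]]]]]] Mp].
  by rewrite (morse_disjoint Mp Mq).
have [s Ms s0] := isolated_invariant_solution (isoM p) Mp.
have [tau [_ Mtau] omtau] := isolated_omega_solution (isoM p) Ms.
have Mr : M r (tau 0) by apply: om; rewrite -s0; exact: omtau.
by rewrite (morse_disjoint (Mtau 0) Mr).
Qed.

Lemma morse_notin_filtration K p x : attracting K -> p \notin K ->
  M p x -> ~ N K x.
Proof.
move=> hK pK Mp NKx; apply: (negP pK).
have fpK := morse_filtration hK.
case: md => _ isoM subS _.
have [s [hs Ms] s0] := isolated_invariant_solution (isoM p) Mp.
have sN0 n : ~ N0 (s n) by apply/invariant_notin_filtration0/subS/Ms.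
have sNK : forall n, 0 <= n -> N K (s n).
  apply: solution_forward_invariant (filtration_exit fpK) hs sN0 _.
  by rewrite s0.
have [tau [htau Mtau] omtau] := isolated_omega_solution (isoM p) (conj hs Ms).
have tauB n : closure (N K `\` N0) (tau n).
  apply: subset_closure; split.
    apply: (omega_limit_sub_closed (morse_filtration_closed hK) hs sNK).
    exact: omtau.
  exact/invariant_notin_filtration0/subS/Mtau.
apply: (morse_set_mem _ (Mtau 0)).
by rewrite -(filtration_Inv fpK); apply: Inv_solution; split.
Qed.

Section Interval.
Variables I J : {set P}.
Hypotheses (hI : attracting I) (hJ : attracting J).

Local Notation B := (closure (N I `\` N J)).

Lemma filtration_setD_sub : B `<=` N I.
Proof.
by apply: closure_sub_closed (morse_filtration_closed hI) _ => x [].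
Qed.

Lemma filtration_setD_sub0 : B `<=` closure (N I `\` N0).
Proof.
by apply: closureS => x [NIx nNJx]; split=> // /(morse_filtration0_sub hJ).
Qed.

Lemma filtration_image_setD x : N J x -> ~ B (f x).
Proof.
move=> NJx Bfx; have [N0x|nN0x] := pselect (N0 x).
  apply: (filtration_image (morse_filtration hI) N0x).
  exact: filtration_setD_sub0.
have : (N J)° (f x).
  apply: contrapT => nint; apply: nN0x.
  exact: (filtration_exit (morse_filtration hJ) (conj NJx nint)).
by move=> /interior_closure_setD /(_ Bfx).
Qed.

Lemma Inv_setD_sub_morse_setI : Defs.Inv U f B `<=` MS I.
Proof.
rewrite -(filtration_Inv (morse_filtration hI)).
exact/InvS/filtration_setD_sub0.
Qed.

Lemma Inv_setD_notin x : Defs.Inv U f B x -> ~ N J x.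
Proof. by move=> /Inv_image Bfx /filtration_image_setD. Qed.

Lemma Inv_setD_interior : Defs.Inv U f B `<=` B°.
Proof.
move=> x Bx.
have NIx : (N I)° x.
  apply: (filtration_invariant_interior (morse_filtration hI)).
  exact: Inv_setD_sub_morse_setI.
apply: (@filterS _ _ _ ((N I)° `&` ~` N J)).
  by move=> y [/interior_subset NIy nNJy]; apply: subset_closure.
apply: open_nbhs_nbhs; split; last by split=> //; exact: Inv_setD_notin.
apply: openI; first exact: open_interior.
by rewrite openC; exact: morse_filtration_closed.
Qed.

Lemma morse_meets_setD p z : M p z -> B z -> p \in I :\: J.
Proof.
move=> Mz Bz; rewrite finset.in_setD; apply/andP; split.
  apply/negP => pJ; apply: (interior_closure_setD _ Bz).
  apply: (filtration_invariant_interior (morse_filtration hJ)).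
  exact: (morse_sub_morse_set pJ Mz).
have [//|pI] := boolP (p \in I).
by case: (morse_notin_filtration hI pI Mz (filtration_setD_sub Bz)).
Qed.

Lemma Inv_setD_sub_morse_set : Defs.Inv U f B `<=` MS (I :\: J).
Proof.
move=> x [Bx [s [ [hs s0] sB]]].
have sS n : S (s n).
  by apply/morse_set_sub_invariant/Inv_setD_sub_morse_setI/Inv_solution.
case: md => _ _ _ /(_ x s (conj hs s0) sS) [ [p Mp] | [p [q [_ [om al]]]]].
  by left; exists p; [exact: (morse_meets_setD (Mp 0) (sB 0)) | rewrite -s0].
have [tau _ omtau] := isolated_omega_solution iS (conj hs sS).
have [tau' _ altau'] := isolated_alpha_solution iS (conj hs sS).
have Btau : B (tau 0).
  apply: (omega_limit_sub_closed (a := 0) (@closed_closure _ _) hs _ (omtau 0)).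
  by move=> n _.
have Btau' : B (tau' 0).
  apply: (alpha_sol_sub_closed (a := 0) (@closed_closure _ _) _ (altau' 0)).
  by move=> n _.
rewrite -s0; apply: (morse_set_of_limits _ _ hs sS om al).
  exact: (morse_meets_setD (om _ (omtau 0)) Btau).
exact: (morse_meets_setD (al _ (altau' 0)) Btau').
Qed.

Lemma morse_sub_Inv_setD p : p \in I :\: J -> M p `<=` Defs.Inv U f B.
Proof.
rewrite finset.in_setD => /andP[pJ pI] x Mx.
case: md => _ isoM _ _.
have [s [hs Ms] <-] := isolated_invariant_solution (isoM p) Mx.
apply: Inv_solution; split=> // n; apply: subset_closure; split.
  apply: interior_subset.
  apply: (filtration_invariant_interior (morse_filtration hI)).
  exact: (morse_sub_morse_set pI (Ms n)).
exact: (morse_notin_filtration hJ pJ (Ms n)).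
Qed.

Lemma connecting_sub_Inv_setD q r : q \in I :\: J -> r \in I :\: J ->
  connecting U f (M q) (M r) S `<=` Defs.Inv U f B.
Proof.
rewrite !finset.in_setD => /andP[_ qI] /andP[rJ _].
move=> x [_ [s [ [hs <-] [sS [al om]]]]].
have sN0 n : ~ N0 (s n) by exact/invariant_notin_filtration0/sS.
have forward K m : attracting K -> N K (s m) -> forall n, m <= n -> N K (s n).
  move=> hK; apply: solution_forward_invariant hs sN0.
  exact: filtration_exit (morse_filtration hK).
have notNJ n : ~ N J (s n).
  move=> /(forward _ _ hJ) NJs.
  have [tau _ omtau] := isolated_omega_solution iS (conj hs sS).
  apply: (morse_notin_filtration hJ rJ (om _ (omtau 0))).
  exact: (omega_limit_sub_closed (morse_filtration_closed hJ) hs NJs (omtau 0)).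
have inNI n : N I (s n).
  apply: contrapT => nNI.
  have [tau _ altau] := isolated_alpha_solution iS (conj hs sS).
  have NIint : (N I)° (tau 0).
    apply: (filtration_invariant_interior (morse_filtration hI)).
    exact: (morse_sub_morse_set qI (al _ (altau 0))).
  have : alpha_sol s `<=` ~` (N I)°.
    apply: (alpha_sol_sub_closed (a := n)).
      by rewrite closedC; exact: open_interior.
    by move=> m mn /interior_subset NIm; exact: nNI (forward _ _ hI NIm n mn).
  by move/(_ _ (altau 0))/(_ NIint).
apply: Inv_solution; split=> // n; apply: subset_closure.
by split; [exact: inNI | exact: notNJ].
Qed.

Lemma Inv_setD : Defs.Inv U f B = MS (I :\: J).
Proof.
apply/seteqP; split; first exact: Inv_setD_sub_morse_set.
move=> x [ [p pIJ Mp] | [q qIJ [r rIJ conn]]].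
  exact: (morse_sub_Inv_setD pIJ Mp).
exact: (connecting_sub_Inv_setD qIJ rIJ conn).
Qed.

End Interval.

End MorseFiltration.

End Dynamics.

Theorem mainTheorem15 (R : realType) (X : pseudoMetricType R)
  (U : set X) (f : X -> X) (P : finType) (lt : rel P)
  (S : set X) (M : P -> set X) (N : {set P} -> set X) (I J : {set P}) :
  hausdorff_space X -> locally_compact [set: X] ->
  open U -> {within U, continuous f} ->
  strict_partial_order lt ->
  isolated_invariant U f S ->
  morse_decomposition U f lt S M ->
  morse_set_filtration U f lt S M N ->
  attracting_interval lt I -> attracting_interval lt J -> J \subset I ->
  filtration_pair U f (morse_set U f S M (I :\: J)) (N I) (N J).
Proof.
move=> hX _ oU cf _ iS md mf hI hJ JI.
have [cI [_ [_ [IU [rI [_ [_ [ [W [oW [exitW WN0]]] _]]]]]]]] :=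
  morse_filtration mf hI.
have [cJ [_ [_ [_ [rJ _]]]]] := morse_filtration mf hJ.
have BI := filtration_setD_sub hX mf (J := J) hI.
split=> //; split=> //; split.
  by move=> x /(morse_filtration_mono mf hJ hI JI).
split=> //; split=> //; split=> //; split.
  split; last exact: (Inv_setD hX oU cf iS md mf hI hJ).
  split; first exact: subclosed_compact (@closed_closure _ _) cI BI.
  split; last by move=> x /(Inv_setD_interior hX mf hI hJ).
  by move=> x /BI /IU /interior_subset.
split.
  by exists W; split=> //; split=> // y /WN0 /(morse_filtration0_sub mf hJ).
apply/seteqP; split=> // _ [ [x NJx <-] Bfx].
exact: (filtration_image_setD mf hI hJ NJx Bfx).
Qed.
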